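(* Let $n,g$ be integers with $0\leq g\leq \left\lfloor \frac{n-3}{2}\right\rfloor$, and let $G$ be a connected graph of order $n$ which has a $g$-good-neighbor cut. Then $$1\leq \kappa^g(G)\leq n-2g-2.$$ Moreover, the upper and lower bounds are sharp (each is attained with equality by some such graph).
   Context: Let $G=(V,E)$ be a connected graph and $g\ge 0$ an integer. A set $F\subseteq V$ is a $g$-good-neighbor faulty set if $|N(v)\cap (V-F)|\geq g$ for every vertex $v\in V-F$ (equivalently, every component of $G-F$ has minimum degree at least $g$). A $g$-good-neighbor cut of $G$ is a $g$-good-neighbor faulty set $F$ such that $G-F$ is disconnected. The $g$-good-neighbor connectivity $\kappa^g(G)$ is the minimum cardinality of a $g$-good-neighbor cut of $G$; it is defined only when $G$ has at least one $g$-good-neighbor cut. *)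

(* Simple graphs on a finType T given by a symmetric,
   irreflexive edge relation e : rel T. *)
From mathcomp Require Import all_boot.
Set Implicit Arguments. Unset Strict Implicit. Unset Printing Implicit Defensive.

Section GoodNeighbor.
Variables (T : finType) (e : rel T).

Definition simple_graph := symmetric e /\ irreflexive e.

Definition graph_connected := forall x y : T, connect e x y.

Definition del_rel (F : {set T}) : rel T :=
  fun a b => [&& e a b, a \notin F & b \notin F].

Definition nbhd_out (F : {set T}) (v : T) : {set T} :=
  [set u | e v u & u \notin F].

Definition good_faulty (g : nat) (F : {set T}) : bool :=
  [forall v, (v \notin F) ==> (g <= #|nbhd_out F v|)].

Definition disconnected_after (F : {set T}) : bool :=
  [exists x, exists y, [&& x \notin F, y \notin F & ~~ connect (del_rel F) x y]].

Definition good_cut (g : nat) (F : {set T}) : bool :=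
  good_faulty g F && disconnected_after F.

(* kappa^g(G): minimum cardinality of a g-good-neighbor cut
   (meaningful only when such a cut exists). *)
Definition kappa_g (g : nat) : nat :=
  \big[minn/#|T|]_(F : {set T} | good_cut g F) #|F|.

End GoodNeighbor.

(* In G - F every surviving vertex keeps at least g neighbours, so every
   component of G - F has at least g + 1 vertices; a cut leaves at least two
   components, whence |F| <= n - 2g - 2, and |F| >= 1 because G is connected.
   For sharpness remove from K_n all edges between two disjoint sets A, B of
   at least g + 1 vertices each: the remaining vertices S form a g-good cut,
   and every cut contains S, since a surviving vertex of S is adjacent to all
   other survivors.  Then kappa^g = |S|, which is 1 or n - 2g - 2 for suitable
   intervals A, B. *)
From mathcomp Require Import all_boot zify.
Set Implicit Arguments. Unset Strict Implicit. Unset Printing Implicit Defensive.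

Lemma card_ord_interval n a b : b <= n -> #|[set i : 'I_n | a <= i < b]| = b - a.
Proof.
move=> bn; rewrite -[b - a]muln1 -sum_nat_const_nat (big_nat_widenl _ 0) //.
rewrite (big_nat_widen _ _ _ _ _ bn) big_mkord -sum1_card.
by apply: eq_bigl => i; rewrite inE.
Qed.

Section GoodNeighborCuts.
Variables (T : finType) (e : rel T).

Lemma hub_connect (P : pred T) (h : T) : symmetric e ->
  (forall z, P z -> z != h -> e z h) -> {in P &, forall x y, connect e x y}.
Proof.
move=> esym hub.
have to_hub z : P z -> connect e z h.
  by move=> Pz; case: (eqVneq z h) => [->|zh]; [exact: connect0 | exact/connect1/hub].
move=> x y Px Py; apply: connect_trans (to_hub x Px) _.
by rewrite (sym_connect_sym esym) to_hub.
Qed.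

Lemma del_rel_sym F : symmetric e -> symmetric (del_rel e F).
Proof. by move=> esym u v; rewrite /del_rel esym; case: (u \in F); case: (v \in F). Qed.

Lemma kappa_g_le_cut g F : good_cut e g F -> kappa_g e g <= #|F|.
Proof.
move=> cutF; rewrite /kappa_g; have := mem_index_enum F.
elim: index_enum => //= G s IH; rewrite inE big_cons => /predU1P[<-|Fs].
  by rewrite cutF geq_minl.
by case: ifP => _; [apply: leq_trans (geq_minr _ _) (IH Fs) | apply: IH].
Qed.

Lemma kappa_g_ge g k : k <= #|T| -> (forall F, good_cut e g F -> k <= #|F|) ->
  k <= kappa_g e g.
Proof.
move=> kT kF; apply: (big_ind (fun m => k <= m)) => // m1 m2 h1 h2.
by rewrite leq_min h1 h2.
Qed.

Lemma good_cut_card_gt0 g F : graph_connected e -> good_cut e g F -> 0 < #|F|.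
Proof.
move=> conn /andP[_ /existsP[x /existsP[y /and3P[_ _ /negP nxy]]]].
rewrite card_gt0; apply: contraPneq nxy => ->.
by rewrite (@eq_connect _ _ e) // => u v; rewrite /del_rel !inE andbT.
Qed.

Section Component.
Variables (g : nat) (F : {set T}).
Hypotheses (e_simple : simple_graph e) (F_good : good_faulty e g F).

Let component z := [set w | connect (del_rel e F) z w].

Lemma component_survives z : z \notin F -> component z \subset ~: F.
Proof.
move=> zF; have closedF : closed (del_rel e F) (~: F).
  by move=> u v /and3P[_ uF vF]; rewrite !inE uF vF.
apply/subsetP => w; rewrite inE => zw.
by rewrite -(closed_connect closedF zw) inE.
Qed.

Lemma component_card z : z \notin F -> g < #|component z|.
Proof.
move=> zF; have [_ e_irr] := e_simple.
have /subset_leq_card : z |: nbhd_out e F z \subset component z.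
  apply/subsetP => w; rewrite !inE => /predU1P[->|/andP[ezw wF]].
    exact: connect0.
  by apply: connect1; rewrite /del_rel ezw zF wF.
apply: leq_trans; rewrite cardsU1 !inE e_irr add1n ltnS.
by have /forallP/(_ z) := F_good; rewrite zF.
Qed.

Lemma good_cut_card : disconnected_after e F -> #|F| + g.*2 + 2 <= #|T|.
Proof.
case/existsP=> x /existsP[y /and3P[xF yF nxy]].
have [e_sym _] := e_simple.
have disj : component x :&: component y = set0.
  apply/setP => w; rewrite !inE; apply/negbTE/andP => -[xw yw].
  move/negP: nxy; apply; apply: connect_trans xw _.
  by rewrite (sym_connect_sym (del_rel_sym F e_sym)).
have /subset_leq_card : component x :|: component y \subset ~: F.
  by rewrite subUset !component_survives.
have := cardsUI (component x) (component y); rewrite disj cards0.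
have := cardsC F; have := component_card xF; have := component_card yF.
lia.
Qed.

End Component.

Lemma kappa_g_bounds g : simple_graph e -> graph_connected e ->
  (exists F, good_cut e g F) -> 1 <= kappa_g e g <= #|T| - g.*2 - 2.
Proof.
move=> e_simple conn [F0 cutF0].
have bound F : good_cut e g F -> #|F| + g.*2 + 2 <= #|T|.
  by case/andP=> goodF; apply: good_cut_card e_simple goodF.
apply/andP; split.
  apply: kappa_g_ge => [|F cutF]; last exact: good_cut_card_gt0 conn cutF.
  by have := bound _ cutF0; lia.
by apply: leq_trans (kappa_g_le_cut cutF0) _; have := bound _ cutF0; lia.
Qed.

End GoodNeighborCuts.

Section CompleteMinusBiclique.
Variables (T : finType) (A B : {set T}).

Definition complete_minus_biclique : rel T :=
  fun u v => (u != v) && ~~ [|| (u \in A) && (v \in B) | (u \in B) && (v \in A)].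

Local Notation e := complete_minus_biclique.
Local Notation S := (~: (A :|: B)).

Lemma complete_minus_biclique_simple : simple_graph e.
Proof.
split; last by move=> u; rewrite /e eqxx.
move=> u v; rewrite /e eq_sym.
by case: (u \in A) (u \in B) (v \in A) (v \in B) => [] [] [] [].
Qed.

Lemma complete_minus_biclique_hub s v : s \in S -> v != s -> e v s.
Proof.
rewrite !inE negb_or /e => /andP[/negPf-> /negPf->] ->.
by rewrite !andbF.
Qed.

Lemma complete_minus_biclique_cut_sup g F : good_cut e g F -> S \subset F.
Proof.
case/andP=> _ /existsP[x /existsP[y /and3P[xF yF /negP nxy]]].
apply/subsetP => s sS; apply: contraT => sF; case: nxy.
apply: (hub_connect (P := [pred z | z \notin F]) (h := s)) xF yF => [|z /= zF zs].
  exact/del_rel_sym/(proj1 complete_minus_biclique_simple).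
by rewrite /del_rel complete_minus_biclique_hub // zF sF.
Qed.

Hypotheses (AB_disj : [disjoint A & B]).

Lemma card_complete_minus_biclique_hubs : #|S| = #|T| - (#|A| + #|B|).
Proof.
by rewrite -(cardsC (A :|: B)) -(cardsUI A B) disjoint_setI0 // cards0 addn0 addKn.
Qed.

Lemma del_hubs_complete_minus_biclique u v :
  del_rel e S u v = (u != v) && [|| (u \in A) && (v \in A) | (u \in B) && (v \in B)].
Proof.
rewrite /del_rel /e !inE !negbK.
case uA: (u \in A); case vA: (v \in A);
  rewrite ?(disjointFr AB_disj uA) ?(disjointFr AB_disj vA) /=;
  by case: (u \in B) (v \in B) => [] []; rewrite /= ?andbT ?andbF.
Qed.

Variable g : nat.
Hypotheses (A_big : g < #|A|) (B_big : g < #|B|).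

Lemma complete_minus_biclique_good_cut : good_cut e g S.
Proof.
have side_clique X v : X = A \/ X = B -> v \in X -> X :\ v \subset nbhd_out e S v.
  move=> XAB vX; apply/subsetP => u /setD1P[uv uX]; rewrite /nbhd_out in_set.
  have : del_rel e S v u.
    by rewrite del_hubs_complete_minus_biclique eq_sym uv; case: XAB => eqX;
       rewrite -eqX vX uX ?orbT.
  by case/and3P=> -> _ ->.
apply/andP; split.
  apply/forallP => v; apply/implyP; rewrite !inE negbK => /orP[vA|vB].
    have /subset_leq_card := side_clique A v (or_introl erefl) vA.
    by have := cardsD1 v A; rewrite vA; lia.
  have /subset_leq_card := side_clique B v (or_intror erefl) vB.
  by have := cardsD1 v B; rewrite vB; lia.
have [x xA] : exists x, x \in A by apply/set0Pn; rewrite -card_gt0; lia.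
have [y yB] : exists y, y \in B by apply/set0Pn; rewrite -card_gt0; lia.
apply/existsP; exists x; apply/existsP; exists y; rewrite !inE xA yB !orbT /=.
have closedA : closed (del_rel e S) A.
  move=> u w; rewrite del_hubs_complete_minus_biclique => /andP[_ /orP[]] /andP[uX wX].
    by rewrite uX wX.
  by rewrite (disjointFl AB_disj uX) (disjointFl AB_disj wX).
by apply/negP => /(closed_connect closedA); rewrite xA (disjointFl AB_disj yB).
Qed.

Lemma complete_minus_biclique_kappa :
  #|A| + #|B| < #|T| ->
  [/\ simple_graph e, graph_connected e, good_cut e g S &
      kappa_g e g = #|T| - (#|A| + #|B|)].
Proof.
move=> small; have cutS := complete_minus_biclique_good_cut.
have [e_sym _] := complete_minus_biclique_simple.
have [s sS] : exists s, s \in S.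
  by apply/set0Pn; rewrite -card_gt0 card_complete_minus_biclique_hubs; lia.
split=> //; first exact: complete_minus_biclique_simple.
  move=> x y; apply: (hub_connect (P := predT) (h := s)) => // z _.
  exact: complete_minus_biclique_hub.
rewrite -card_complete_minus_biclique_hubs; apply/eqP; rewrite eqn_leq.
rewrite kappa_g_le_cut //=; apply: kappa_g_ge => [|F /complete_minus_biclique_cut_sup].
  exact: max_card.
exact: subset_leq_card.
Qed.

End CompleteMinusBiclique.

Lemma kappa_complete_minus_interval_biclique n g a b c : a <= b -> b <= c -> c <= n ->
  g < b - a -> g < c - b -> c - a < n ->
  exists e : rel 'I_n, [/\ simple_graph e, graph_connected e,
    (exists F : {set 'I_n}, good_cut e g F) & kappa_g e g = n - (c - a)].
Proof.
move=> ab bc cn gA gB small.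
set A := [set i : 'I_n | a <= i < b]; set B := [set i : 'I_n | b <= i < c].
have cardA : #|A| = b - a by apply: card_ord_interval; lia.
have cardB : #|B| = c - b by apply: card_ord_interval.
have disjAB : [disjoint A & B].
  by rewrite -setI_eq0; apply/eqP/setP => i; rewrite !inE; lia.
have := @complete_minus_biclique_kappa _ A B disjAB g.
rewrite card_ord cardA cardB => -[||| simple conn cut kappa]; try lia.
exists (complete_minus_biclique A B); split=> //; first by exists (~: (A :|: B)).
by rewrite kappa; lia.
Qed.

Theorem corollary2p1 (n g : nat) :
  3 <= n -> g <= (n - 3)./2 ->
  (forall (T : finType) (e : rel T),
      #|T| = n -> simple_graph e -> graph_connected e ->
      (exists F : {set T}, good_cut e g F) ->
      1 <= kappa_g e g <= n - g.*2 - 2)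
  /\ (exists e : rel 'I_n,
        [/\ simple_graph e, graph_connected e,
            (exists F : {set 'I_n}, good_cut e g F) & kappa_g e g = 1])
  /\ (exists e : rel 'I_n,
        [/\ simple_graph e, graph_connected e,
            (exists F : {set 'I_n}, good_cut e g F) & kappa_g e g = n - g.*2 - 2]).
Proof.
rewrite geq_half_double => n_ge3 g_small; split; last split.
- by move=> T e <-; apply: kappa_g_bounds.
- have [||||||e [simple conn cut kappa]] :=
    @kappa_complete_minus_interval_biclique n g 1 g.+2 n; try lia.
  by exists e; split; rewrite // kappa; lia.
- have [||||||e [simple conn cut kappa]] :=
    @kappa_complete_minus_interval_biclique n g 0 g.+1 g.*2.+2; try lia.
  by exists e; split; rewrite // kappa; lia.
Qed.
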